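(* Let $p$ be a prime and let $d_1,\dots,d_l$ be integers with $1\le d_\lambda\le p$. Then for every integer $s$ with $1\le s\le p-1$, \[ \mathrm{sht}_V(s)\le\frac{(s-1)D_V}{p}. \]
   Context: Here $D_V:=\sum_{\lambda=1}^{l}\frac{(d_\lambda-1)d_\lambda}{2}$ and, for a positive integer $j$ with $p\nmid j$, $\mathrm{sht}_V(j):=\sum_{\lambda=1}^{l}\sum_{i=1}^{d_\lambda-1}\lfloor ij/p\rfloor$. *)

From mathcomp Require Import all_boot all_order all_algebra.
Set Implicit Arguments. Unset Strict Implicit. Unset Printing Implicit Defensive.

(* D_V := sum_{lambda=1}^l (d_lambda - 1) d_lambda / 2 ;
   (d-1)d is always even, so the nat division by 2 is exact. *)
Definition D_V (l : nat) (d : 'I_l -> nat) : nat :=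
  \sum_(lam < l) (((d lam).-1 * d lam) %/ 2).

Definition sht_V (p l : nat) (d : 'I_l -> nat) (j : nat) : nat :=
  \sum_(lam < l) \sum_(1 <= i < d lam) ((i * j) %/ p).

(* For [s] prime to [p] and [d <= p], the residues of [i * s] modulo [p], [0 < i < d],
   are pairwise distinct and nonzero, so they add up to at least [1 + ... + (d - 1)].
   Since [i * s = p * ((i * s) %/ p) + (i * s) %% p], this gives
   [p * sum_i (i * s) %/ p <= (s - 1) * 'C(d, 2)]; summing over the blocks [d_lambda]
   is the theorem, as [D_V] is the sum of the ['C(d_lambda, 2)]. *)
From mathcomp Require Import all_boot all_order all_algebra.
From mathcomp Require Import zify.
Import Order.TTheory GRing.Theory Num.Theory.

Lemma bin2_size_leq_sum_uniq (m : nat) (t : seq nat) :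
  uniq t -> {subset t <= iota 1 m} -> 'C((size t).+1, 2) <= \sum_(x <- t) x.
Proof.
elim: m t => [|m IHm] t t_uniq t_sub.
  by case: t {t_uniq} t_sub => [|x t] // /(_ x (mem_head _ _)).
have t_size : size t <= m.+1 by rewrite -(size_iota 1 m.+1) uniq_leq_size.
have [tm|tNm] := boolP (m.+1 \in t); last first.
  apply: IHm => // x xt; have xNm : x != m.+1 by apply: contraNneq tNm => <-.
  by have := t_sub x xt; rewrite !mem_iota; lia.
rewrite (perm_big _ (perm_to_rem tm)) big_cons binS bin1.
have rem_sub : {subset rem m.+1 t <= iota 1 m}.
  move=> x; rewrite mem_rem_uniq // inE => /andP [xNm /t_sub].
  by rewrite !mem_iota; lia.
have := IHm _ (rem_uniq _ t_uniq) rem_sub; rewrite size_rem //.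
by case: (size t) t_size => //= n; lia.
Qed.

Section ResiduesOfMultiples.

Variables p s : nat.
Hypothesis coprime_ps : coprime p s.

Lemma modn_mulr_inj i j : i < p -> j < p -> i * s = j * s %[mod p] -> i = j.
Proof.
wlog le_ij : i j / i <= j => [wlog_ij|] ip jp eq_ij.
  by case: (leqP i j) => [|/ltnW] ?; [|symmetry]; apply: wlog_ij.
move: eq_ij => /esym/eqP; rewrite eqn_mod_dvd ?leq_mul2r ?le_ij ?orbT //.
rewrite -mulnBl Gauss_dvdl //; have [->|neq_ij] := eqVneq i j => // dv.
by have := dvdn_leq _ dv; lia.
Qed.

Lemma modn_mulr_gt0 i : 0 < i < p -> 0 < i * s %% p.
Proof.
move=> /andP [i_gt0 ip]; rewrite lt0n; apply: contraTneq ip => /eqP.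
by rewrite -/(dvdn p (i * s)) Gauss_dvdl // => /dvdn_leq; lia.
Qed.

Lemma bin2_leq_sum_modn_mulr d : d <= p -> 'C(d, 2) <= \sum_(1 <= i < d) (i * s %% p).
Proof.
case: d => [//|d] dp; rewrite -(big_map (fun i => i * s %% p) xpredT id).
set t := map _ _; have -> : d = size t by rewrite size_map size_iota subn1.
apply: (@bin2_size_leq_sum_uniq p.-1).
  rewrite map_inj_in_uniq ?iota_uniq // => i j; rewrite !mem_index_iota => i_range j_range.
  by apply: modn_mulr_inj; lia.
move=> x /mapP [i]; rewrite mem_index_iota => i_range ->; rewrite mem_iota.
have := ltn_mod (i * s) p; have := @modn_mulr_gt0 i; lia.
Qed.

End ResiduesOfMultiples.

Lemma sum_divn_modn_mulr (p s d : nat) :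
  p * \sum_(1 <= i < d) (i * s %/ p) + \sum_(1 <= i < d) (i * s %% p) = s * 'C(d, 2).
Proof.
case: d => [|d]; first by rewrite !big_geq // !muln0.
rewrite -bin2_sum (@big_ltn _ _ _ 0) // add0n.
rewrite !big_distrr -big_split; apply: eq_bigr => i _ /=.
by rewrite mulnC -divn_eq mulnC.
Qed.

Lemma sum_divn_mulr_leq (p s d : nat) : coprime p s -> 0 < s -> d <= p ->
  p * \sum_(1 <= i < d) (i * s %/ p) <= s.-1 * 'C(d, 2).
Proof.
move=> coprime_ps s_gt0 dp; have := sum_divn_modn_mulr p s d.
have := bin2_leq_sum_modn_mulr _ _ coprime_ps _ dp; rewrite -(prednK s_gt0) mulSn; lia.
Qed.

Theorem lemma3p3 (p l : nat) (d : 'I_l -> nat) (s : nat) :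
  prime p ->
  (forall lam : 'I_l, 1 <= d lam <= p) ->
  1 <= s <= p.-1 ->
  ((sht_V p d s)%:R <= ((s.-1 * D_V d)%:R / p%:R :> rat))%R.
Proof.
move=> p_prime d_range /andP [s_gt0 sp].
have coprime_ps : coprime p s.
  by rewrite prime_coprime //; apply/negP => /dvdn_leq; lia.
rewrite ler_pdivlMr ?ltr0n ?prime_gt0 // -natrM ler_nat mulnC.
rewrite /sht_V /D_V !big_distrr /=; apply: leq_sum => lam _.
have -> : (d lam).-1 * d lam %/ 2 = 'C(d lam, 2) by rewrite bin2 -divn2 mulnC.
by apply: sum_divn_mulr_leq => //; case/andP: (d_range lam).
Qed.
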